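(* Let $m\geq2$. Then a graph $G$ is minor maximal amongst graphs with $n$ vertices, at most $m$ parallel edges between any given pair of vertices, and spectator floor $n-1$, if and only if $G$ is an $m$-saturated crowded $1$-parade, i.e., every pair of its $n$ vertices is joined by exactly $m$ edges.
   Context: All graphs are finite, have at least one vertex, have no loops, and may have multiple (parallel) edges. A minor of $H$ is any graph obtained from $H$ by a sequence of: deleting an isolated vertex, deleting an edge, contracting an edge that has no edge parallel to it. A graph $G$ in a class $\mathcal{C}$ is minor maximal in $\mathcal{C}$ if no graph in $\mathcal{C}$ other than $G$ has $G$ as a minor. An $m$-saturated crowded $1$-parade is a graph in which every pair of vertices is joined by exactly $m$ edges. A unique shortest path is a shortest $u$–$v$ path $P$ such that every $u$–$v$ path with the same number of vertices is identical to $P$, where two paths with different edge sequences are different even if their vertex sequences agree; a single vertex is a unique shortest path. The parade number $\mathrm{usp}(G)$ is the largest number of vertices of a unique shortest path in $G$. The spectator number is $\mathrm{sp}(G)=|V(G)|-\mathrm{usp}(G)$. The spectator floor $\lfloor \mathrm{sp}\rfloor(G)$ is the minimum of $\mathrm{sp}(H)$ over all graphs $H$ of which $G$ is a minor. *)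

From mathcomp Require Import all_boot.
Set Implicit Arguments. Unset Strict Implicit. Unset Printing Implicit Defensive.

(* The edges between x and y are labelled
   0, ..., mult G x y - 1 (the same labels seen from either endpoint). *)
Record mgraph := MGraph {
  nv : nat;
  mult : 'I_nv -> 'I_nv -> nat;
  mult_sym : forall x y, mult x y = mult y x;
  mult_irr : forall x, mult x x = 0;
  nv_pos : 0 < nv }.
Arguments mult : clear implicits.

Definition iso (G H : mgraph) : Prop :=
  exists f : 'I_(nv G) -> 'I_(nv H),
    bijective f /\ forall x y, mult H (f x) (f y) = mult G x y.

Definition del_isolated_vertex (G H : mgraph) : Prop :=
  exists v : 'I_(nv G),
    (forall w, mult G v w = 0) /\ (nv H).+1 = nv G /\
    exists f : 'I_(nv H) -> 'I_(nv G),
      injective f /\ (forall x, f x != v) /\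
      forall x y, mult H x y = mult G (f x) (f y).

Definition del_edge (G H : mgraph) : Prop :=
  exists a b : 'I_(nv G), 0 < mult G a b /\
    exists f : 'I_(nv H) -> 'I_(nv G),
      bijective f /\
      forall x y, mult H x y =
        mult G (f x) (f y)
        - (((f x == a) && (f y == b)) || ((f x == b) && (f y == a))).

Definition contract_edge (G H : mgraph) : Prop :=
  exists a b : 'I_(nv G), mult G a b = 1 /\
    exists q : 'I_(nv G) -> 'I_(nv H),
      (forall X, exists x, q x = X) /\ q a = q b /\
      (forall x y, q x = q y -> x = y \/ (x \in [:: a; b] /\ y \in [:: a; b])) /\
      forall X Y, X != Y ->
        mult H X Y = \sum_(x | q x == X) \sum_(y | q y == Y) mult G x y.

Definition minor_step (G H : mgraph) : Prop :=
  del_isolated_vertex G H \/ del_edge G H \/ contract_edge G H.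

Inductive reaches : mgraph -> mgraph -> Prop :=
  | reaches_refl G : reaches G G
  | reaches_step G H K : minor_step G H -> reaches H K -> reaches G K.

Definition is_minor (G H : mgraph) : Prop :=
  exists K, reaches H K /\ iso K G.

Definition is_path (G : mgraph) (u v : 'I_(nv G))
    (rest : seq 'I_(nv G)) (es : seq nat) : Prop :=
  [/\ last u rest = v, uniq (u :: rest), size es = size rest &
      forall i, i < size rest ->
        nth 0 es i < mult G (nth u (u :: rest) i) (nth u rest i)].

Definition is_usp (G : mgraph) (u v : 'I_(nv G))
    (rest : seq 'I_(nv G)) (es : seq nat) : Prop :=
  [/\ is_path u v rest es,
      (forall rest' es', is_path u v rest' es' -> size rest <= size rest') &
      (forall rest' es', is_path u v rest' es' -> size rest' = size rest ->
         rest' = rest /\ es' = es)].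

Definition usp_eq (G : mgraph) (k : nat) : Prop :=
  (exists u v rest es, @is_usp G u v rest es /\ (size rest).+1 = k) /\
  (forall u v rest es, @is_usp G u v rest es -> (size rest).+1 <= k).

Definition sp_eq (G : mgraph) (s : nat) : Prop :=
  exists k, usp_eq G k /\ s = nv G - k.

Definition sp_floor_eq (G : mgraph) (f : nat) : Prop :=
  (exists H, is_minor G H /\ sp_eq H f) /\
  (forall H s, is_minor G H -> sp_eq H s -> f <= s).

Definition classC (n m : nat) (G : mgraph) : Prop :=
  [/\ nv G = n, (forall x y, mult G x y <= m) & sp_floor_eq G (n - 1)].

Definition minor_maximal (C : mgraph -> Prop) (G : mgraph) : Prop :=
  C G /\ forall H, C H -> is_minor G H -> iso H G.

Definition saturated (m : nat) (G : mgraph) : Prop :=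
  forall x y : 'I_(nv G), x != y -> mult G x y = m.

(* Let G be m-saturated with m >= 2, and let H contain G as a minor, witnessed
   by disjoint connected branch sets.  A unique shortest path P of H has neither
   chords nor parallel edges, so every connected vertex set inside P is an
   interval of P and two disjoint such sets are joined by at most one edge.
   Since G has at least two edges between any two vertices, at most one branch
   set lies inside P and each of the others owns a vertex off P; hence
   |V(G)| - 1 <= |V(H)| - |P|, i.e. sp(H) >= n - 1, with equality for H = G.
   So G is in the class.  It is maximal: an H in the class containing G as a
   minor has n vertices, so the branch sets are singletons and H has at least,
   hence exactly, m edges between any two vertices.  Conversely, if some pair
   of G carries fewer than m edges, adding one more edge stays in the class and
   yields a graph that has G as a minor without being isomorphic to it. *)

From mathcomp Require Import all_boot zify.
From Stdlib Require Import Classical_Prop.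
Set Implicit Arguments. Unset Strict Implicit. Unset Printing Implicit Defensive.

Definition edges_between (H : mgraph) (A B : {set 'I_(nv H)}) : nat :=
  \sum_(a in A) \sum_(b in B) mult H a b.

Definition connected_set (H : mgraph) (S : {set 'I_(nv H)}) : Prop :=
  forall A : {set 'I_(nv H)}, A \subset S -> forall a c, a \in A -> c \in S -> c \notin A ->
    exists u v, [/\ u \in A, v \in S, v \notin A & 0 < mult H u v].

Definition branch (H K : mgraph) (phi : 'I_(nv H) -> option 'I_(nv K)) (x : 'I_(nv K)) :
  {set 'I_(nv H)} := [set u | phi u == Some x].

(* [phi u = Some x] puts u into the branch set of x; [phi u = None] deletes u. *)
Definition minor_model (K H : mgraph) (phi : 'I_(nv H) -> option 'I_(nv K)) : Prop :=
  [/\ forall x, exists u, phi u = Some x,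
      forall x, connected_set (branch phi x) &
      forall x y, x != y -> mult K x y <= edges_between (branch phi x) (branch phi y)].
Arguments minor_model : clear implicits.

Lemma sum_nat_gt0_exists (I : finType) (P : pred I) (F : I -> nat) :
  0 < \sum_(i | P i) F i -> exists2 i, P i & 0 < F i.
Proof.
rewrite lt0n sum_nat_eq0 => /forallPn [i]; rewrite negb_imply -lt0n => /andP[].
by exists i.
Qed.

Lemma sum_rel_le1 (I J : finType) (A : {pred I}) (B : {pred J}) (R : I -> J -> bool) :
  (forall a b a' b', a \in A -> b \in B -> a' \in A -> b' \in B ->
     R a b -> R a' b' -> a = a' /\ b = b') ->
  \sum_(a in A) \sum_(b in B) R a b <= 1.
Proof.
move=> R_uniq; rewrite pair_big /= -big_mkcondr /= sum1_card.
apply/card_le1_eqP => -[a b] [a' b'] /= => /andP[/andP[aA bB] Rab].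
by case/andP=> /andP[a'A b'B] Ra'b'; case: (R_uniq a b a' b') => // -> ->.
Qed.

Lemma connected_set_imset (H G : mgraph) (f : 'I_(nv H) -> 'I_(nv G)) (S : {set 'I_(nv H)}) :
  injective f -> (forall x y, mult H x y <= mult G (f x) (f y)) ->
  connected_set S -> connected_set (f @: S).
Proof.
move=> f_inj f_mult S_conn A' A'S a c aA' /imsetP[c0 c0S ->] c0A'.
have /imsetP[a0 _ a0E] := subsetP A'S a aA'.
have AS : f @^-1: A' \subset S.
  by apply/subsetP => u; rewrite inE => /(subsetP A'S) /imsetP[w wS /f_inj ->].
have [//|||u [v [uA vS vA uv]]] := S_conn _ AS a0 c0; rewrite ?inE -?a0E //.
rewrite !inE in uA vA; exists (f u), (f v); split; rewrite ?imset_f //.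
exact: leq_trans uv (f_mult u v).
Qed.

Lemma edges_between_imset (H G : mgraph) (f : 'I_(nv H) -> 'I_(nv G)) (A B : {set 'I_(nv H)}) :
  injective f -> edges_between (f @: A) (f @: B) = \sum_(a in A) \sum_(b in B) mult G (f a) (f b).
Proof.
move=> f_inj; have f_injA (D : {set 'I_(nv H)}) : {in D &, injective f} by move=> ? ? _ _ /f_inj.
rewrite /edges_between big_imset //; apply: eq_bigr => a _; exact: big_imset.
Qed.

Lemma minor_model_subgraph (K H G : mgraph) (f : 'I_(nv H) -> 'I_(nv G)) phi :
  injective f -> (forall x y, mult H x y <= mult G (f x) (f y)) ->
  minor_model K H phi -> exists phi', minor_model K G phi'.
Proof.
move=> f_inj f_mult [phi_onto phi_conn phi_mult].
pose phi' w := if [pick u | f u == w] is Some u then phi u else None.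
have phi'_f u : phi' (f u) = phi u.
  by rewrite /phi'; case: pickP => [u' /eqP /f_inj -> | /(_ u)]; rewrite ?eqxx.
have branchE x : branch phi' x = f @: branch phi x.
  apply/setP => w; rewrite !inE; apply/idP/imsetP => [|[u + ->]]; last by rewrite inE phi'_f.
  by rewrite /phi'; case: pickP => // u /eqP <- phiu; exists u; rewrite ?inE.
exists phi'; split=> [x | x | x y xy]; rewrite ?branchE.
- by have [u phiu] := phi_onto x; exists (f u); rewrite phi'_f.
- exact: connected_set_imset.
- rewrite edges_between_imset //; apply: leq_trans (phi_mult x y xy) _.
  by apply: leq_sum => a _; apply: leq_sum => b _.
Qed.

Lemma big_preimset (R : Type) (idx : R) (op : Monoid.com_law idx) (I J : finType)
    (q : I -> J) (A : {pred J}) (F : I -> R) :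
  \big[op/idx]_(i in q @^-1: A) F i = \big[op/idx]_(j in A) \big[op/idx]_(i | q i == j) F i.
Proof.
rewrite (partition_big q (mem A)) => [|i]; last by rewrite inE.
apply: eq_bigr => j jA; apply: eq_bigl => i; rewrite inE.
by rewrite andb_idl // => /eqP ->.
Qed.

Section Contraction.

Variables (G H : mgraph) (a b : 'I_(nv G)) (q : 'I_(nv G) -> 'I_(nv H)).
Hypothesis ab_edge : 0 < mult G a b.
Hypothesis q_fibre : forall x y, q x = q y -> x = y \/ (x \in [:: a; b] /\ y \in [:: a; b]).
Hypothesis q_mult : forall X Y, X != Y ->
  mult H X Y = \sum_(x | q x == X) \sum_(y | q y == Y) mult G x y.

Lemma edges_between_preimset (A B : {set 'I_(nv H)}) : [disjoint A & B] ->
  edges_between (q @^-1: A) (q @^-1: B) = edges_between A B.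
Proof.
move=> AB; rewrite /edges_between big_preimset; apply: eq_bigr => X XA.
rewrite (eq_bigr (fun x => \sum_(Y in B) \sum_(y | q y == Y) mult G x y)) => [|x _];
  last exact: big_preimset.
rewrite exchange_big; apply: eq_bigr => Y YB; rewrite q_mult //.
by apply: contraTneq XA => ->; rewrite (disjointFl AB).
Qed.

Lemma connected_set_preimset (S : {set 'I_(nv H)}) :
  connected_set S -> connected_set (q @^-1: S).
Proof.
move=> S_conn A' A'S a' c a'A' cS cA'.
have [abA'|] := boolP [&& a \in A', b \in q @^-1: S & b \notin A'].
  by case/and3P: abA' => *; exists a, b.
have [baA'|] := boolP [&& b \in A', a \in q @^-1: S & a \notin A'].
  by case/and3P: baA' => *; exists b, a; rewrite mult_sym.
(* Otherwise A' is a union of fibres of q, so its image is a proper part of S. *)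
move=> ba ab.
have A'_sat w w' : w \in A' -> w' \in q @^-1: S -> q w = q w' -> w' \in A'.
  move=> wA' w'S /q_fibre [<- // | []]; rewrite !inE => wab w'ab.
  apply: contraT => w'A'.
  case/orP: wab w'ab => /eqP ew /orP[] /eqP ew'; subst w w';
    by [rewrite wA' in w'A' | rewrite wA' w'S w'A' in ab | rewrite wA' w'S w'A' in ba].
have qA'S : q @: A' \subset S.
  by apply/subsetP => _ /imsetP[w /(subsetP A'S) + ->]; rewrite inE.
have [||| U [V [/imsetP[w wA' ->] VS VA mUV]]] := S_conn _ qA'S (q a') (q c).
- exact: imset_f.
- by rewrite inE in cS.
- by apply/imsetP => -[w wA' qc]; rewrite (A'_sat w c) in cA'.
have qwV : q w != V by apply: contraTneq mUV => ->; rewrite mult_irr.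
move: mUV; rewrite q_mult // => /sum_nat_gt0_exists[u /eqP qu /sum_nat_gt0_exists[v /eqP qv muv]].
exists u, v; split => //.
- by apply: (A'_sat w) => //; rewrite inE qu; apply: (subsetP qA'S); apply: imset_f.
- by rewrite inE qv.
- by apply: contra VA => vA'; rewrite -qv imset_f.
Qed.

End Contraction.

Lemma branch_disjoint (H K : mgraph) (phi : 'I_(nv H) -> option 'I_(nv K)) x y :
  x != y -> [disjoint branch phi x & branch phi y].
Proof.
move=> xy; apply/pred0P => u /=; rewrite !inE.
by apply: contraNF xy => /andP[/eqP-> /eqP[->]].
Qed.

Lemma minor_model_contract (K G H : mgraph) phi :
  contract_edge G H -> minor_model K H phi -> exists phi', minor_model K G phi'.
Proof.
move=> [a [b [ab1 [q [q_onto [_ [q_fibre q_mult]]]]]]] [phi_onto phi_conn phi_mult].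
have branchE x : branch (phi \o q) x = q @^-1: branch phi x by apply/setP => u; rewrite !inE.
exists (phi \o q); split=> [x | x | x y xy]; rewrite ?branchE.
- by have [U phiU] := phi_onto x; have [u qu] := q_onto U; exists u; rewrite /= qu.
- by apply: (connected_set_preimset _ q_fibre q_mult (phi_conn x)); rewrite ab1.
- by rewrite (edges_between_preimset q_mult) ?phi_mult ?branch_disjoint.
Qed.

Lemma minor_model_iso (K G H : mgraph) phi :
  iso K G -> minor_model K H phi -> exists phi', minor_model G H phi'.
Proof.
move=> [f [[g fK gK] f_mult]] [phi_onto phi_conn phi_mult].
have branchE x : branch (omap f \o phi) x = branch phi (g x).
  apply/setP => u; rewrite !inE /=; case: (phi u) => //= z.
  by apply/eqP/eqP => [[<-] | [->]]; rewrite ?fK ?gK.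
exists (omap f \o phi); split=> [x | x | x y xy]; rewrite ?branchE //.
- by have [u phiu] := phi_onto (g x); exists u; rewrite /= phiu /= gK.
- rewrite -{1}(gK x) -{1}(gK y) f_mult; apply: phi_mult.
  by apply: contra xy => /eqP/(can_inj gK)->.
Qed.

Lemma minor_model_refl (K : mgraph) : minor_model K K Some.
Proof.
have branchE x : branch Some x = [set x] by apply/setP => u; rewrite !inE.
split=> [x | x | x y _]; rewrite ?branchE.
- by exists x.
- move=> A /subsetP A_x a c aA; rewrite inE => /eqP->.
  by have := A_x a aA; rewrite inE => /eqP <-; rewrite aA.
- by rewrite /edges_between !big_set1.
Qed.

Lemma reaches_minor_model (H K : mgraph) : reaches H K -> exists phi, minor_model K H phi.
Proof.
elim=> [G | G G' K' step _ [phi phi_model]]; first by exists Some; apply: minor_model_refl.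
case: step => [[v [_ [_ [f [f_inj [_ f_mult]]]]]] | [[a [b [_ [f [f_bij f_mult]]]]] | contr]].
- by apply: minor_model_subgraph f_inj _ phi_model => x y; rewrite f_mult.
- by apply: minor_model_subgraph (bij_inj f_bij) _ phi_model => x y; rewrite f_mult leq_subr.
- exact: minor_model_contract contr phi_model.
Qed.

Lemma is_minor_model (K H : mgraph) : is_minor K H -> exists phi, minor_model K H phi.
Proof.
move=> [K' [HK' K'K]]; have [phi phi_model] := reaches_minor_model HK'.
exact: minor_model_iso K'K phi_model.
Qed.

Lemma nth_take_drop (T : Type) (x0 : T) (s : seq T) n p l : n <= p -> n <= size s ->
  nth x0 (take n s ++ drop p s) l = if l < n then nth x0 s l else nth x0 s (l + (p - n)).
Proof.
move=> np ns; rewrite nth_cat size_takel //; case: ifP => ln; first by rewrite nth_take.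
by rewrite nth_drop; congr nth; lia.
Qed.

Definition consecutive (i j : nat) : bool := (i.+1 == j) || (j.+1 == i).

Definition convex (P : pred nat) : Prop := forall i j k, i < j < k -> P i -> P k -> P j.

Lemma convex_consecutive_unique (P Q : pred nat) i j i' j' :
  convex P -> convex Q -> (forall l, P l -> ~~ Q l) ->
  P i -> Q j -> P i' -> Q j' -> consecutive i j -> consecutive i' j' -> i = i' /\ j = j'.
Proof.
move=> P_conv Q_conv PQ Pi Qj Pi' Qj'.
have notPQ l : P l -> Q l -> False by move=> /PQ /negP.
wlog ii' : i j i' j' Pi Qj Pi' Qj' / i <= i'.
  move=> W adj adj'; case: (leqP i i') => [ii' | /ltnW i'i]; first exact: W.
  by have [-> ->] := W i' j' i j Pi' Qj' Pi Qj i'i adj' adj.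
rewrite /consecutive => adj adj'.
have ii : i = i'.
  apply/eqP; rewrite eqn_leq ii' leqNgt; apply/negP => lt; case/orP: adj => /eqP ij.
  - case: (j =P i') => [ji' | /eqP ji']; first by apply: (notPQ i') => //; rewrite -ji'.
    by apply: (notPQ j) => //; apply: (P_conv i j i') => //; apply/andP; split; lia.
  - case: (i =P j') => [ij' | /eqP ij']; first by apply: (notPQ i) => //; rewrite ij'.
    by apply: (notPQ i) => //; apply: (Q_conv j i j') => //; apply/andP; split; lia.
split=> //; subst i'; apply/eqP/negPn/negP => jj'.
apply: (notPQ i) => //.
case/orP: adj => /eqP ij; case/orP: adj' => /eqP ij'; try lia.
- by apply: (Q_conv j' i j) => //; apply/andP; split; lia.
- by apply: (Q_conv j i j') => //; apply/andP; split; lia.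
Qed.

Section Paths.

Variables (H : mgraph) (u v : 'I_(nv H)) (rest : seq 'I_(nv H)) (es : seq nat).
Local Notation s := (u :: rest).

(* The shortcut keeps the edge labels before i and after j and uses the chord
   with label 0. *)
Lemma is_path_shortcut i j :
  is_path u v rest es -> i < j < size rest ->
  0 < mult H (nth u s i) (nth u rest j) ->
  is_path u v (take i rest ++ drop j rest)
    (take i (set_nth 0 es j 0) ++ drop j (set_nth 0 es j 0)).
Proof.
move=> [last_v uniq_s size_es edge_es] /andP[ij j_rest] chord.
have s'E : u :: (take i rest ++ drop j rest) = take i.+1 s ++ drop j.+1 s by [].
have size_rest' : size (take i rest ++ drop j rest) = i + (size rest - j).
  by rewrite size_cat size_drop size_takel //; lia.
have size_es' : size (set_nth 0 es j 0) = size rest.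
  by rewrite size_set_nth size_es; apply/maxn_idPr.
split.
- rewrite last_cat (drop_nth u j_rest) -last_v -[in RHS](cat_take_drop j rest).
  by rewrite last_cat (drop_nth u j_rest).
- rewrite s'E; apply: subseq_uniq uniq_s; rewrite -{3}(cat_take_drop j.+1 s).
  by rewrite cat_subseq // -(@take_takel _ i.+1 j.+1) ?take_subseq //; lia.
- by rewrite size_rest' size_cat size_drop size_takel size_es' //; lia.
- have vertE k : nth u (u :: (take i rest ++ drop j rest)) k =
      if k < i.+1 then nth u s k else nth u s (k + (j - i)).
    by rewrite s'E nth_take_drop //=; lia.
  move=> l; rewrite size_rest' => l_lt.
  rewrite (nth_take_drop _ _ (ltnW ij)); last by rewrite size_es'; lia.
  have -> : nth u (take i rest ++ drop j rest) l =
            nth u (u :: (take i rest ++ drop j rest)) l.+1 by [].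
  rewrite !vertE; case: (ltngtP l i) => [li | il | ->]; rewrite !nth_set_nth /=.
  + rewrite ifN_eq; last lia.
    by rewrite !ltnS (ltnW li) li; apply: edge_es; lia.
  + have [-> ->] : (l < i.+1) = false /\ (l.+1 < i.+1) = false.
      by split; apply/negbTE; rewrite -leqNgt //; lia.
    rewrite ifN_eq; last lia.
    by apply: edge_es; lia.
  + by rewrite ltnSn ltnn subnKC ?eqxx // ltnW.
Qed.

Hypothesis usp : is_usp u v rest es.

Lemma usp_mult_step_le1 i : i < size rest ->
  mult H (nth u s i) (nth u rest i) <= 1.
Proof.
(* Otherwise relabelling the i-th edge gives a second path of the same length. *)
case: usp => [[last_v uniq_s size_es edge_es] _ usp_uniq] i_rest.
rewrite leqNgt; apply/negP => mult_gt1.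
pose e' := (nth 0 es i == 0 : nat).
have e'_new : e' != nth 0 es i by rewrite /e'; case: (nth 0 es i).
have P' : is_path u v rest (set_nth 0 es i e').
  split => // [|k k_rest]; first by rewrite size_set_nth size_es; apply/maxn_idPr.
  rewrite nth_set_nth /=; case: (k =P i) => [->|_]; last exact: edge_es.
  by apply: leq_trans mult_gt1; rewrite /e'; case: eqP.
have [_ es_eq] := usp_uniq _ _ P' erefl.
by move: e'_new; rewrite -es_eq nth_set_nth /= eqxx eqxx.
Qed.

Lemma usp_no_chord i j : i < j < size rest ->
  mult H (nth u s i) (nth u rest j) = 0.
Proof.
case: (usp) => [P P_min _] ijr; apply/eqP; rewrite -leqn0 leqNgt; apply/negP => chord.
have := P_min _ _ (is_path_shortcut P ijr chord).
by rewrite size_cat size_drop size_takel; lia.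
Qed.

Lemma usp_mult_nth i j : i < j < size s ->
  mult H (nth u s i) (nth u s j) <= (i.+1 == j).
Proof.
case: j => [|j] //= /andP[ij j_rest].
case: (i =P j) => [->|ne]; first by rewrite eqxx usp_mult_step_le1.
by rewrite usp_no_chord //; apply/andP; split; lia.
Qed.

Lemma usp_mult_le_consecutive a b : a \in s -> b \in s ->
  mult H a b <= consecutive (index a s) (index b s).
Proof.
wlog ab : a b / index a s <= index b s.
  move=> W aS bS; case: (leqP (index a s) (index b s)) => [|/ltnW] ab.
    exact: W.
  by rewrite mult_sym /consecutive orbC; apply: W.
move=> aS bS; case: (a =P b) => [-> | /eqP a_b]; first by rewrite mult_irr.
have ab' : index a s < index b s.
  by rewrite ltn_neqAle ab andbT; apply: contra a_b => /eqP/index_inj->.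
rewrite -{1}(nth_index u aS) -{1}(nth_index u bS).
apply: leq_trans (usp_mult_nth _) _; first by rewrite ab' index_mem.
by rewrite /consecutive; case: eqP.
Qed.

Let positions (S : {set 'I_(nv H)}) : pred nat :=
  [pred l | (l < size s) && (nth u s l \in S)].

Lemma usp_positions_convex (S : {set 'I_(nv H)}) :
  {subset S <= s} -> connected_set S -> convex (positions S).
Proof.
move=> S_path S_conn i j k /andP[ij jk] /andP[i_size Si] /andP[k_size Sk].
have j_size : j < size s by apply: ltn_trans k_size.
rewrite /positions /= j_size /=; apply: contraT => Sj.
have uniq_s : uniq s by case: usp => -[].
pose A := [set w in S | index w s < j].
have AS : A \subset S by apply/subsetP => w; rewrite inE => /andP[].
have [||| x [y [xA yS yA mxy]]] := S_conn A AS (nth u s i) (nth u s k) => //.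
- by rewrite inE Si index_uniq.
- by rewrite inE Sk index_uniq // -leqNgt ltnW.
move: xA yA; rewrite !inE yS andTb -leqNgt => /andP[xS xj] jy.
have yj : index y s != j by apply: contra Sj => /eqP <-; rewrite nth_index ?S_path.
have := leq_trans mxy (usp_mult_le_consecutive (S_path _ xS) (S_path _ yS)).
rewrite /consecutive lt0b; move: xj jy yj; move: (index x _) (index y _) => ix iy; lia.
Qed.

Lemma usp_edges_between_le1 (S T : {set 'I_(nv H)}) :
  {subset S <= s} -> {subset T <= s} -> [disjoint S & T] ->
  connected_set S -> connected_set T -> edges_between S T <= 1.
Proof.
move=> S_path T_path ST S_conn T_conn.
have index_pos (R : {set 'I_(nv H)}) w : {subset R <= s} -> w \in R -> positions R (index w s).
  by move=> R_path wR; apply/andP; rewrite index_mem nth_index R_path.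
have ST_pos l : positions S l -> ~~ positions T l.
  by case/andP=> _ lS; apply/negP => /andP[_]; rewrite (disjointFr ST lS).
apply: leq_trans (_ : \sum_(a in S) \sum_(b in T) consecutive (index a s) (index b s) <= 1).
  by apply: leq_sum => a aS; apply: leq_sum => b bT; apply: usp_mult_le_consecutive; auto.
apply: sum_rel_le1 => a b a' b' aS bT a'S b'T ab a'b'.
have [ia ib] := convex_consecutive_unique
  (usp_positions_convex S_path S_conn) (usp_positions_convex T_path T_conn) ST_pos
  (index_pos _ _ S_path aS) (index_pos _ _ T_path bT)
  (index_pos _ _ S_path a'S) (index_pos _ _ T_path b'T) ab a'b'.
split; first by rewrite -(nth_index u (S_path _ aS)) ia nth_index //; apply: S_path.
by rewrite -(nth_index u (T_path _ bT)) ib nth_index //; apply: T_path.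
Qed.

End Paths.

Section UspInModel.

Variables (G H : mgraph) (phi : 'I_(nv H) -> option 'I_(nv G)).
Variables (u v : 'I_(nv H)) (rest : seq 'I_(nv H)) (es : seq nat).
Hypothesis G_mult : forall x y, x != y -> 1 < mult G x y.
Hypothesis phi_model : minor_model G H phi.
Hypothesis usp : is_usp u v rest es.

Lemma usp_contains_one_branch x y :
  {subset branch phi x <= u :: rest} -> {subset branch phi y <= u :: rest} -> x = y.
Proof.
case: phi_model => _ phi_conn phi_mult x_path y_path; apply/eqP/negPn/negP => xy.
have := leq_trans (G_mult xy) (phi_mult x y xy).
by rewrite ltnNge (usp_edges_between_le1 usp) ?branch_disjoint.
Qed.

Lemma usp_size_le_minor : nv G - 1 <= nv H - (size rest).+1.
Proof.
pose off_path := [set w | w \notin u :: rest].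
pose J := [set x | ~~ (branch phi x \subset u :: rest)].
have notJ_le1 : #|~: J| <= 1.
  apply/card_le1_eqP => x y; rewrite !inE !negbK => /subsetP x_path /subsetP y_path.
  exact: usp_contains_one_branch.
have J_le : #|J| <= #|off_path|.
  rewrite -(card_imset _ (@Some_inj _)); apply: leq_trans (leq_imset_card phi _).
  apply: subset_leq_card; apply/subsetP => _ /imsetP[x + ->]; rewrite inE.
  case/subsetPn => w; rewrite inE => /eqP <- w_off.
  by rewrite imset_f // inE.
have off_pathE : #|off_path| + (size rest).+1 = nv H.
  have uniq_s : uniq (u :: rest) by case: usp => -[].
  have -> : off_path = ~: [set w in u :: rest] by apply/setP => w; rewrite !inE.
  rewrite -[(size rest).+1]/(size (u :: rest)) -(card_uniqP uniq_s).
  by rewrite -(cardsE (mem (u :: rest))) addnC cardsC card_ord.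
have := cardsC J; rewrite card_ord; lia.
Qed.

End UspInModel.

Lemma ex_max_bounded (P : nat -> Prop) B : (exists k, P k) -> (forall k, P k -> k <= B) ->
  exists k, P k /\ forall k', P k' -> k' <= k.
Proof.
elim: B => [|B IHB] [k Pk] P_le.
  by exists k; split=> // k' /P_le; rewrite leqn0 => /eqP->.
have [PB1 | nPB1] := classic (P B.+1); first by exists B.+1.
apply: IHB => [|k' Pk']; first by exists k.
by have := P_le k' Pk'; rewrite leq_eqVlt => /orP[/eqP e | //]; rewrite e in Pk'.
Qed.

Lemma usp_trivial (H : mgraph) (u : 'I_(nv H)) : is_usp u u [::] [::].
Proof. by split=> [|//|[|? ?] [|? ?] []]. Qed.

Lemma usp_size_le (H : mgraph) u v rest es : @is_usp H u v rest es -> (size rest).+1 <= nv H.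
Proof.
case=> -[_ uniq_s _ _] _ _.
by have := max_card (mem (u :: rest)); rewrite card_ord (card_uniqP uniq_s).
Qed.

Lemma usp_eq_exists (H : mgraph) : exists k, usp_eq H k.
Proof.
pose P k := exists u v rest es, @is_usp H u v rest es /\ (size rest).+1 = k.
have P1 : P 1.
  by pose u := Ordinal (nv_pos H); exists u, u, [::], [::]; split=> //; apply: usp_trivial.
have P_le k : P k -> k <= nv H by move=> [u [v [rest [es [P' <-]]]]]; apply: usp_size_le P'.
have [k [Pk k_max]] := ex_max_bounded (ex_intro _ 1 P1) P_le.
by exists k; split=> // u v rest es P'; apply: k_max; exists u, v, rest, es.
Qed.

Lemma is_minor_refl (G : mgraph) : is_minor G G.
Proof. by exists G; split; [apply: reaches_refl | exists id; split=> //; exists id]. Qed.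

Lemma sp_floor_eq_of_sp_ge (G : mgraph) :
  (forall H s, is_minor G H -> sp_eq H s -> nv G - 1 <= s) -> sp_floor_eq G (nv G - 1).
Proof.
move=> sp_ge; split=> //; exists G; split; first exact: is_minor_refl.
have [k usp_k] := usp_eq_exists G; exists k; split=> //.
have k_gt0 : 0 < k by case: usp_k => -[u [v [rest [es [_ <-]]]]].
have := sp_ge G _ (is_minor_refl G) (ex_intro _ k (conj usp_k erefl)); lia.
Qed.

Definition edge_ind n (a b x y : 'I_n) : nat := ((x == a) && (y == b)) || ((x == b) && (y == a)).

Lemma edge_ind_sym n (a b x y : 'I_n) : edge_ind a b x y = edge_ind a b y x.
Proof. by rewrite /edge_ind orbC [(y == a) && _]andbC [(y == b) && _]andbC. Qed.

Lemma edge_ind_irr n (a b x : 'I_n) : a != b -> edge_ind a b x x = 0.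
Proof.
move=> ab; rewrite /edge_ind [(x == b) && _]andbC orbb.
by case: (x =P a) => //= ->; rewrite (negPf ab).
Qed.

Section RemoveEdge.

Variables (G : mgraph) (a b : 'I_(nv G)).

Definition remove_edge : mgraph :=
  @MGraph (nv G) (fun x y => mult G x y - edge_ind a b x y)
    (fun x y => congr2 subn (mult_sym x y) (edge_ind_sym a b x y))
    (fun x => congr1 (subn^~ _) (mult_irr x)) (nv_pos G).

Lemma del_edge_remove_edge : 0 < mult G a b -> del_edge G remove_edge.
Proof. by move=> ab; exists a, b; split=> //; exists id; split=> //; exists id. Qed.

End RemoveEdge.
Arguments remove_edge : clear implicits.

Section AddEdge.

Variables (G : mgraph) (a b : 'I_(nv G)).
Hypothesis ab : a != b.

Definition add_edge : mgraph :=
  @MGraph (nv G) (fun x y => mult G x y + edge_ind a b x y)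
    (fun x y => congr2 addn (mult_sym x y) (edge_ind_sym a b x y))
    (fun x => congr2 addn (mult_irr x) (edge_ind_irr x ab)) (nv_pos G).

Lemma add_edgeK : mult (remove_edge add_edge a b) =2 mult G.
Proof. by move=> x y /=; rewrite addnK. Qed.

Lemma is_minor_add_edge : is_minor G add_edge.
Proof.
exists (remove_edge add_edge a b); split.
  apply: reaches_step (reaches_refl _); right; left; apply: del_edge_remove_edge.
  by rewrite /= /edge_ind !eqxx addn1.
by exists id; split; [exists id | move=> x y; rewrite add_edgeK].
Qed.

Lemma add_edge_not_iso : ~ iso add_edge G.
Proof.
move=> [f [f_bij f_mult]].
have total_mult : \sum_x \sum_y mult G (f x) (f y) = \sum_x \sum_y mult G x y.
  rewrite [RHS](reindex_inj (bij_inj f_bij)); apply: eq_bigr => x _.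
  by rewrite [RHS](reindex_inj (bij_inj f_bij)).
have : \sum_x \sum_y edge_ind a b x y = 0.
  apply/eqP; rewrite -(eqn_add2l (\sum_x \sum_y mult G x y)) addn0 -{2}total_mult -big_split.
  by apply/eqP/eq_bigr => x _; rewrite -big_split; apply: eq_bigr => y _; rewrite f_mult.
move/eqP; rewrite sum_nat_eq0 => /forallP/(_ a); rewrite sum_nat_eq0 => /forallP/(_ b).
by rewrite /edge_ind !eqxx.
Qed.

End AddEdge.

Lemma reaches_trans (G H K : mgraph) : reaches G H -> reaches H K -> reaches G K.
Proof. by elim=> // G0 H0 K0 step _ IH /IH; apply: reaches_step step. Qed.

Lemma is_minor_add_edgeW (G H : mgraph) (x y : 'I_(nv G)) (xy : x != y) :
  is_minor (add_edge xy) H -> is_minor G H.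
Proof.
move=> [K [HK [f [[g fK gK] f_mult]]]].
have indE u v : edge_ind x y (f u) (f v) = edge_ind (g x) (g y) u v.
  by rewrite /edge_ind !(can2_eq fK gK).
exists (remove_edge K (g x) (g y)); split.
  apply: reaches_trans HK (reaches_step _ (reaches_refl _)); right; left.
  by apply: del_edge_remove_edge; rewrite -f_mult /= indE /edge_ind !eqxx addn1.
exists f; split; first by exists g.
by move=> u v; rewrite /= -f_mult /= indE addnK.
Qed.

Lemma add_edge_mult_le (G : mgraph) (x y : 'I_(nv G)) (xy : x != y) m :
  (forall a b, mult G a b <= m) -> mult G x y < m -> forall a b, mult (add_edge xy) a b <= m.
Proof.
move=> G_le xy_lt a b /=; rewrite /edge_ind.
case: ((a == x) && (b == y)) / andP => [[/eqP-> /eqP->] | _]; first by rewrite addn1.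
case: ((a == y) && (b == x)) / andP => [[/eqP-> /eqP->] | _]; last by rewrite addn0.
by rewrite addn1 mult_sym.
Qed.

Lemma minor_model_saturated m (G H : mgraph) phi :
  minor_model G H phi -> nv G = nv H -> saturated m G ->
  forall u v : 'I_(nv H), u != v -> m <= mult H u v.
Proof.
move=> [phi_onto _ phi_mult] nvGH G_sat.
pose psi x := odflt (Ordinal (nv_pos H)) [pick u | phi u == Some x].
have phi_psi x : phi (psi x) = Some x.
  rewrite /psi; case: pickP => [u /eqP // | none].
  by have [u phiu] := phi_onto x; move: (none u); rewrite phiu eqxx.
have psi_inj : injective psi by move=> x y e; have := phi_psi x; rewrite e phi_psi => -[].
have psi_onto w : w \in codom psi by apply: inj_card_onto; rewrite ?card_ord ?nvGH.
have branchE x : branch phi x = [set psi x].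
  apply/setP => w; rewrite !inE; case/codomP: (psi_onto w) => x' ->.
  by rewrite phi_psi (inj_eq (@Some_inj _)) (inj_eq psi_inj).
move=> u v; case/codomP: (psi_onto u) => x ->; case/codomP: (psi_onto v) => y -> uv.
have xy : x != y by apply: contraNneq uv => ->.
by have := phi_mult x y xy; rewrite !branchE /edges_between !big_set1 G_sat.
Qed.

Lemma iso_saturated m (G H : mgraph) :
  nv H = nv G -> saturated m H -> saturated m G -> iso H G.
Proof.
move=> nvHG H_sat G_sat; exists (cast_ord nvHG); split.
  by exists (cast_ord (esym nvHG)); [apply: cast_ordK | apply: cast_ordKV].
move=> x y; case: (x =P y) => [-> | /eqP xy]; first by rewrite !mult_irr.
by rewrite G_sat ?H_sat // (inj_eq (cast_ord_inj (eq_n := nvHG))).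
Qed.

Lemma sp_floor_eq_saturated m (G : mgraph) :
  1 < m -> saturated m G -> sp_floor_eq G (nv G - 1).
Proof.
move=> m_gt1 G_sat; apply: sp_floor_eq_of_sp_ge.
move=> H _ /is_minor_model[phi phi_model] [_ [[[u [v [rest [es [P <-]]]]] _] ->]].
by apply: usp_size_le_minor phi_model P => x y xy; rewrite G_sat.
Qed.

Theorem lemma7p5 (m n : nat) (G : mgraph) :
  2 <= m ->
  (minor_maximal (classC n m) G <-> (nv G = n /\ saturated m G)).
Proof.
move=> m_ge2; split.
- case=> -[nvG G_le [_ sp_ge]] G_max; split=> // x y xy.
  apply/eqP; rewrite eqn_leq G_le leqNgt; apply/negP => xy_lt.
  apply: (add_edge_not_iso (G_max _ _ (is_minor_add_edge xy))).
  split=> //; first exact: add_edge_mult_le.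
  rewrite -nvG; apply: sp_floor_eq_of_sp_ge => H s /is_minor_add_edgeW.
  by rewrite /= nvG; apply: sp_ge.
- case=> nvG G_sat.
  have G_le x y : mult G x y <= m.
    by case: (x =P y) => [-> | /eqP xy]; rewrite ?mult_irr ?G_sat.
  split; first by split=> //; rewrite -nvG; apply: sp_floor_eq_saturated G_sat.
  move=> H [nvH H_le _] /is_minor_model[phi phi_model].
  apply: (iso_saturated _ _ G_sat); first by rewrite nvH.
  move=> u v uv; apply/eqP; rewrite eqn_leq H_le.
  by apply: minor_model_saturated phi_model _ G_sat _ _ uv; rewrite nvG.
Qed.
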